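(* Let $G$ be a finitely presented group given by a presentation $P=\langle x_1,\ldots,x_n\mid u_1^{m_1},\ldots,u_r^{m_r}\rangle$ with $n,m_i\ge 1$, where each $u_i$ is an element of the free group $F_n$ on $x_1,\ldots,x_n$ that is not a proper power in $F_n$. Let $\varphi:F_n\to G$ be the canonical map, $R_G$ the finite residual of $G$, and $k_i$ the order of $\varphi(u_i)R_G$ in $G/R_G$. Then there exist finite index normal subgroups $H$ of $G$ such that the order of $\varphi(u_i)H$ in $G/H$ is $k_i$ for all $1\le i\le r$. Moreover, every such $H$ satisfies \[def(H)\ge 1+|G:H|\,(rdef(P)-1),\qquad\text{where } rdef(P)=n-\sum_{i=1}^r\frac1{k_i}.\]
   Context: The finite residual $R_G$ of $G$ is the intersection of all finite index subgroups of $G$. The deficiency of a finite presentation $\langle X\mid R\rangle$ is $|X|-|R|$, and $def(H)$ is the supremum of deficiencies over all finite presentations of $H$. The quantity $rdef(P)$ is the residual deficiency of the presentation $P$ (each $k_i$ is finite since $u_i^{m_i}$ is trivial in $G$). *)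

From mathcomp Require Import all_boot all_order all_algebra.
From Stdlib Require Import Relations.
Set Implicit Arguments. Unset Strict Implicit. Unset Printing Implicit Defensive.
Import GRing.Theory Num.Theory.

Record Grp := MkGrp {
  carrier :> Type;
  gmul : carrier -> carrier -> carrier;
  ginv : carrier -> carrier;
  gone : carrier;
  gmulA : forall x y z, gmul x (gmul y z) = gmul (gmul x y) z;
  gmul1 : forall x, gmul gone x = x;
  gmulV : forall x, gmul (ginv x) x = gone }.

Definition gpow (G : Grp) (x : G) (k : nat) : G := iter k (gmul x) (gone G).

(* Words in the free group F_n: letters (i, b), b = true meaning x_i^{-1}. *)
Definition letter (n : nat) := ('I_n * bool)%type.
Definition word (n : nat) := seq (letter n).
Definition linv n (l : letter n) : letter n := (l.1, ~~ l.2).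
Definition winv n (w : word n) : word n := rev (map (@linv n) w).
Definition wpow n (w : word n) (k : nat) : word n := flatten (nseq k w).

(* one-step free reduction, and free equality (= equality in F_n) *)
Inductive red_step n : word n -> word n -> Prop :=
  | RedStep : forall (a b : word n) (l : letter n),
      red_step (a ++ [:: l; linv l] ++ b) (a ++ b).
Definition freeq n : relation (word n) := clos_refl_sym_trans _ (@red_step n).

Definition proper_power n (u : word n) : Prop :=
  exists (v : word n) (k : nat), 2 <= k /\ freeq u (wpow v k).

Inductive in_ncl n (R : seq (word n)) : word n -> Prop :=
  | ncl_nil : in_ncl R [::]
  | ncl_conj : forall v r w, r \in R -> in_ncl R w ->
      in_ncl R (v ++ r ++ winv v ++ w)
  | ncl_conjV : forall v r w, r \in R -> in_ncl R w ->
      in_ncl R (v ++ winv r ++ winv v ++ w)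
  | ncl_freeq : forall w w', freeq w w' -> in_ncl R w -> in_ncl R w'.

Definition eval (G : Grp) n (g : 'I_n -> G) (w : word n) : G :=
  foldr (fun l acc => gmul (if l.2 then ginv (g l.1) else g l.1) acc) (gone G) w.

Definition subgroup (G : Grp) (H : G -> Prop) : Prop :=
  H (gone G) /\ (forall x y, H x -> H y -> H (gmul x y)) /\
  (forall x, H x -> H (ginv x)).
Definition normal_subgroup (G : Grp) (H : G -> Prop) : Prop :=
  subgroup H /\ forall x y, H x -> H (gmul (ginv y) (gmul x y)).

Definition index_is (G : Grp) (H : G -> Prop) (d : nat) : Prop :=
  exists s : 'I_d -> G,
    (forall x, exists j, H (gmul (ginv (s j)) x)) /\
    (forall j j', H (gmul (ginv (s j)) (s j')) -> j = j').
Definition finite_index (G : Grp) (H : G -> Prop) : Prop :=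
  subgroup H /\ exists d, index_is H d.

Definition finite_residual (G : Grp) : G -> Prop :=
  fun x => forall K : G -> Prop, finite_index K -> K x.

Definition order_mod (G : Grp) (N : G -> Prop) (x : G) (k : nat) : Prop :=
  0 < k /\ N (gpow x k) /\ forall j, 0 < j < k -> ~ N (gpow x j).

Definition presents (G : Grp) n (g : 'I_n -> G) (R : seq (word n)) : Prop :=
  (forall x : G, exists w, eval g w = x) /\
  (forall w, eval g w = gone G <-> in_ncl R w).

Definition presents_sub (G : Grp) (H : G -> Prop) m (h : 'I_m -> G)
    (R : seq (word m)) : Prop :=
  (forall j, H (h j)) /\
  (forall x : G, H x -> exists w, eval h w = x) /\
  (forall w, eval h w = gone G <-> in_ncl R w).

(* def(H) >= c, where def(H) is the supremum of |X| - |R| over all finite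
   presentations <X | R> of H *)
Definition deficiency_ge (G : Grp) (H : G -> Prop) (c : rat) : Prop :=
  forall e : rat, (0 < e)%R ->
    exists m (h : 'I_m -> G) (R : seq (word m)),
      presents_sub H h R /\ (c - e < m%:R - (size R)%:R :> rat)%R.

Definition relators n r (u : 'I_r -> word n) (mm : 'I_r -> nat) : seq (word n) :=
  [seq wpow (u i) (mm i) | i <- enum 'I_r].

(* Existence: by definition of R_G, each of the finitely many elements u_i^j,
   0 < j < k_i, lies outside some finite-index subgroup; the intersection of
   the normal cores of these subgroups is a finite-index normal subgroup modulo
   which every u_i still has order k_i.
   Deficiency: if H is normal of index d, Reidemeister-Schreier presents H on
   the d n Schreier generators, with the d - 1 rewritten transversal words and
   the rewritten relators tau_t(u_i^m_i) for every coset t. Since u_i has order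
   k_i modulo H, the cosets split into d / k_i orbits of <u_i> of size k_i, and
   the rewritten relators along an orbit are conjugate to each other, so one
   per orbit suffices: def(H) >= d n - (d - 1) - d (sum_i 1/k_i). *)

From mathcomp Require Import all_boot all_order all_algebra.
From mathcomp Require Import lra.
From Stdlib Require Import Relations.
From mathcomp Require Import boolp.
Set Implicit Arguments. Unset Strict Implicit. Unset Printing Implicit Defensive.
Import GRing.Theory Num.Theory.

Section GroupTheory.
Variable G : Grp.
Local Notation "x * y" := (gmul x y).
Local Notation "1" := (gone G).
Local Notation "x ^-1" := (ginv x).

Lemma gmulrV (x : G) : x * x^-1 = 1.
Proof.
rewrite -[x * x^-1]gmul1 -{1}(gmulV (x^-1)) -gmulA [x^-1 * (x * x^-1)]gmulA gmulV gmul1.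
by rewrite gmulV.
Qed.

Lemma gmulr1 (x : G) : x * 1 = x.
Proof. by rewrite -(gmulV x) gmulA gmulrV gmul1. Qed.

Lemma gmulK (x y : G) : x^-1 * (x * y) = y.
Proof. by rewrite gmulA gmulV gmul1. Qed.

Lemma gmulVK (x y : G) : x * (x^-1 * y) = y.
Proof. by rewrite gmulA gmulrV gmul1. Qed.

Lemma gmulI (x y z : G) : x * y = x * z -> y = z.
Proof. by move=> e; rewrite -(gmulK x y) e gmulK. Qed.

Lemma ginvK (x : G) : (x^-1)^-1 = x.
Proof. by apply: (@gmulI (x^-1)); rewrite gmulrV gmulV. Qed.

Lemma ginv1 : (1 : G)^-1 = 1.
Proof. by rewrite -{2}(gmulV 1) gmulr1. Qed.

Lemma ginvM (x y : G) : (x * y)^-1 = y^-1 * x^-1.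
Proof.
apply: (@gmulI (x * y)); rewrite gmulrV -gmulA [y * (y^-1 * x^-1)]gmulA gmulrV gmul1.
by rewrite gmulrV.
Qed.

End GroupTheory.

Section NormalSubgroup.
Variables (G : Grp) (H : G -> Prop).
Hypothesis hN : normal_subgroup H.

Lemma nsg1 : H (gone G). Proof. by case: hN => [[]]. Qed.

Lemma nsgM x y : H x -> H y -> H (gmul x y).
Proof. by case: hN => [[_ []]]; auto. Qed.

Lemma nsgV x : H x -> H (ginv x).
Proof. by case: hN => [[_ []]]; auto. Qed.

Lemma nsgJ x y : H x -> H (gmul (ginv y) (gmul x y)).
Proof. by case: hN => _; auto. Qed.

Lemma nsgJV x y : H x -> H (gmul y (gmul x (ginv y))).
Proof. by move=> hx; have := nsgJ (ginv y) hx; rewrite ginvK. Qed.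

Lemma nsgVE x : H (ginv x) -> H x.
Proof. by move=> h; have := nsgV h; rewrite ginvK. Qed.

End NormalSubgroup.

Section FreeWords.
Variable n : nat.
Implicit Types (a b c v w : word n) (l : letter n).

Lemma linvK l : linv (linv l) = l.
Proof. by case: l => x []. Qed.

Lemma winv_cat a b : winv (a ++ b) = winv b ++ winv a.
Proof. by rewrite /winv map_cat rev_cat. Qed.

Lemma winv_cons l w : winv (l :: w) = winv w ++ [:: linv l].
Proof. by rewrite /winv /= rev_cons -cats1. Qed.

Lemma winvK w : winv (winv w) = w.
Proof.
rewrite /winv map_rev -map_comp (eq_map (g := id)) ?map_id ?revK // => l /=.
by rewrite linvK.
Qed.

Lemma wpowD w i j : wpow w (i + j) = wpow w i ++ wpow w j.
Proof. by rewrite /wpow nseqD flatten_cat. Qed.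

Lemma wpowC w i j : wpow w i ++ wpow w j = wpow w j ++ wpow w i.
Proof. by rewrite -!wpowD addnC. Qed.

Lemma red_step_ctx c d a a' :
  red_step a a' -> red_step (c ++ a ++ d) (c ++ a' ++ d).
Proof.
case=> x y l.
have -> : c ++ (x ++ [:: l; linv l] ++ y) ++ d = (c ++ x) ++ [:: l; linv l] ++ (y ++ d).
  by rewrite !catA.
have -> : c ++ (x ++ y) ++ d = (c ++ x) ++ (y ++ d) by rewrite !catA.
exact: RedStep.
Qed.

Lemma freeq_ctx c d a a' : freeq a a' -> freeq (c ++ a ++ d) (c ++ a' ++ d).
Proof.
elim=> [x y r|x|x y _ IH|x y z _ IH1 _ IH2].
- by apply: rst_step; apply: red_step_ctx.
- exact: rst_refl.
- exact: rst_sym.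
- exact: rst_trans IH1 IH2.
Qed.

Lemma freeq_catl c a a' : freeq a a' -> freeq (c ++ a) (c ++ a').
Proof. by move=> h; have := freeq_ctx c [::] h; rewrite !cats0. Qed.

Lemma freeq_catr d a a' : freeq a a' -> freeq (a ++ d) (a' ++ d).
Proof. by move=> h; have := freeq_ctx [::] d h. Qed.

Lemma freeq_winvl v : freeq (winv v ++ v) [::].
Proof.
elim: v => [|l v IH] /=; first exact: rst_refl.
rewrite winv_cons -catA; apply: rst_trans IH.
have -> : [:: linv l] ++ l :: v = [:: linv l; linv (linv l)] ++ v by rewrite linvK.
by apply: rst_step; apply: (RedStep (winv v)).
Qed.

Lemma freeq_winvr v : freeq (v ++ winv v) [::].
Proof. by have := freeq_winvl (winv v); rewrite winvK. Qed.

Lemma freeq_winvK a b : freeq (winv a ++ a ++ b) b.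
Proof. by rewrite catA; apply: freeq_catr (freeq_winvl a). Qed.

Lemma red_step_winv a b : red_step a b -> red_step (winv a) (winv b).
Proof.
case=> x y l; rewrite !winv_cat.
have -> : winv [:: l; linv l] = [:: l; linv l] by rewrite /winv /= linvK.
by rewrite -catA; apply: RedStep.
Qed.

Lemma freeq_winv a b : freeq a b -> freeq (winv a) (winv b).
Proof.
elim=> [x y r|x|x y _ IH|x y z _ IH1 _ IH2].
- by apply: rst_step; apply: red_step_winv.
- exact: rst_refl.
- exact: rst_sym.
- exact: rst_trans IH1 IH2.
Qed.

Variable R : seq (word n).

Lemma ncl_mem r : r \in R -> in_ncl R r.
Proof. by move=> rR; have := ncl_conj [::] rR (ncl_nil R); rewrite /= cats0. Qed.

Lemma ncl_cat a b : in_ncl R a -> in_ncl R b -> in_ncl R (a ++ b).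
Proof.
move=> ha hb; elim: ha => [|v r w rR _ IH|v r w rR _ IH|w w' e _ IH] //.
- by rewrite -!catA; apply: ncl_conj.
- by rewrite -!catA; apply: ncl_conjV.
- by apply: ncl_freeq IH; apply: freeq_catr.
Qed.

Lemma ncl_conjw c a : in_ncl R a -> in_ncl R (c ++ a ++ winv c).
Proof.
elim=> [|v r w rR _ IH|v r w rR _ IH|w w' e _ IH].
- by apply: ncl_freeq (ncl_nil R); apply: rst_sym; apply: freeq_winvr.
- apply: ncl_freeq (ncl_conj (c ++ v) rR IH); rewrite winv_cat -!catA.
  by do 4 apply: freeq_catl; apply: freeq_winvK.
- apply: ncl_freeq (ncl_conjV (c ++ v) rR IH); rewrite winv_cat -!catA.
  by do 4 apply: freeq_catl; apply: freeq_winvK.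
- by apply: ncl_freeq IH; apply: freeq_catl; apply: freeq_catr.
Qed.

Lemma ncl_winv a : in_ncl R a -> in_ncl R (winv a).
Proof.
elim=> [|v r w rR _ IH|v r w rR _ IH|w w' e _ IH].
- exact: ncl_nil.
- rewrite !winv_cat winvK -!catA; apply: ncl_cat IH _.
  by have := ncl_conjV v rR (ncl_nil R); rewrite cats0.
- rewrite !winv_cat !winvK -!catA; apply: ncl_cat IH _.
  by have := ncl_conj v rR (ncl_nil R); rewrite cats0.
- by apply: ncl_freeq IH; apply: freeq_winv.
Qed.

End FreeWords.

Section Evaluation.
Variables (G : Grp) (n : nat) (g : 'I_n -> G).
Implicit Types (a b w : word n) (l : letter n).

Lemma eval_cat a b : eval g (a ++ b) = gmul (eval g a) (eval g b).
Proof. by elim: a => [|l a IH] /=; rewrite ?gmul1 // IH gmulA. Qed.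

Lemma eval_cons l w : eval g (l :: w) = gmul (eval g [:: l]) (eval g w).
Proof. by rewrite /= gmulr1. Qed.

Lemma eval_winv w : eval g (winv w) = ginv (eval g w).
Proof.
elim: w => [|l w IH]; first by rewrite /= ginv1.
rewrite winv_cons eval_cat IH eval_cons ginvM; congr gmul.
by case: l => x [] /=; rewrite !gmulr1 ?ginvK.
Qed.

Lemma eval_red a b : red_step a b -> eval g a = eval g b.
Proof.
case=> x y l; rewrite !eval_cat; congr gmul.
by case: l => z []; rewrite /= gmulr1 ?gmulV ?gmulrV gmul1.
Qed.

Lemma eval_freeq a b : freeq a b -> eval g a = eval g b.
Proof.
elim=> [x y r|x|x y _ IH|x y z _ IH1 _ IH2] //; first exact: eval_red.
by rewrite IH1.
Qed.

Lemma eval_wpow w k : eval g (wpow w k) = gpow (eval g w) k.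
Proof. by elim: k => [|k IH] //; rewrite /wpow /= -/(wpow w k) eval_cat IH. Qed.

Lemma eval_ncl (R : seq (word n)) w :
  (forall r, r \in R -> eval g r = gone G) -> in_ncl R w -> eval g w = gone G.
Proof.
move=> hR; elim=> [|v r w' rR _ IH|v r w' rR _ IH|w1 w2 e _ IH] //.
- by rewrite !eval_cat (hR r rR) IH gmul1 eval_winv gmulr1 gmulrV.
- by rewrite !eval_cat eval_winv (hR r rR) ginv1 IH gmul1 eval_winv gmulr1 gmulrV.
- by rewrite -(eval_freeq e).
Qed.

End Evaluation.

Section Cosets.
Variables (G : Grp) (n : nat) (g : 'I_n -> G) (H : G -> Prop) (d : nat) (c : 'I_d -> G).
Hypothesis hN : normal_subgroup H.
Hypothesis cover : forall x, exists j, H (gmul (ginv (c j)) x).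
Hypothesis cuniq : forall j j', H (gmul (ginv (c j)) (c j')) -> j = j'.

Definition coset_of (z : G) : 'I_d :=
  proj1_sig (cid (cover z)).

Lemma coset_ofP z : H (gmul (ginv (c (coset_of z))) z).
Proof. exact: proj2_sig (cid (cover z)). Qed.

Lemma coset_of_uniq j z : H (gmul (ginv (c j)) z) -> j = coset_of z.
Proof.
move=> h; apply: cuniq; have := nsgM hN h (nsgV hN (coset_ofP z)).
by rewrite ginvM ginvK -!gmulA gmulVK.
Qed.

Lemma coset_of_eq z z' : H (gmul (ginv z) z') -> coset_of z = coset_of z'.
Proof.
move=> h; apply: coset_of_uniq; have := nsgM hN (coset_ofP z) h.
by rewrite -!gmulA gmulVK.
Qed.

Lemma coset_of_rep t : coset_of (c t) = t.
Proof. by apply/esym/coset_of_uniq; rewrite gmulV; apply: nsg1 hN. Qed.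

Definition coset_next (t : 'I_d) (l : letter n) := coset_of (gmul (c t) (eval g [:: l])).
Definition act (t : 'I_d) (w : word n) := foldl coset_next t w.

Lemma actE t w : act t w = coset_of (gmul (c t) (eval g w)).
Proof.
elim: w t => [|l w IH] t; first by rewrite /= gmulr1 coset_of_rep.
have -> : act t (l :: w) = act (coset_next t l) w by [].
rewrite IH; apply: coset_of_eq.
rewrite eval_cons ginvM -!gmulA gmul1.
have := nsgJ hN (eval g w) (coset_ofP (gmul (c t) (eval g [:: l]))).
by rewrite /coset_next /= !gmulr1 -!gmulA.
Qed.

Lemma act_cat t a b : act t (a ++ b) = act (act t a) b.
Proof. by rewrite /act foldl_cat. Qed.

Lemma act_id t w : H (eval g w) -> act t w = t.
Proof. by move=> h; rewrite actE; apply/esym/coset_of_uniq; rewrite gmulK. Qed.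

Lemma act_idE t w : act t w = t -> H (eval g w).
Proof.
by move=> e; have := coset_ofP (gmul (c t) (eval g w)); rewrite -actE e gmulK.
Qed.

Lemma act_winv t v : act (act t v) (winv v) = t.
Proof.
by rewrite -act_cat; apply: act_id; rewrite eval_cat eval_winv gmulrV; apply: nsg1 hN.
Qed.

Lemma coset_nextK t l : coset_next (coset_next t l) (linv l) = t.
Proof.
apply: (@act_id t [:: l; linv l]).
by case: l => x [] /=; rewrite gmulr1 ?gmulV ?gmulrV; apply: nsg1 hN.
Qed.

(* Reidemeister rewriting: the Schreier generator with index enum_rank (t, i)
   stands for c_t x_i c_{t x_i}^-1, and tau t w spells w, read from the coset
   c_t H, in these generators. *)
Definition ngens := #|{: 'I_d * 'I_n}|.

Definition tau_letter (t : 'I_d) (l : letter n) : letter ngens :=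
  if l.2 then (enum_rank (coset_next t l, l.1), true) else (enum_rank (t, l.1), false).

Fixpoint tau (t : 'I_d) (w : word n) : word ngens :=
  if w is l :: w' then tau_letter t l :: tau (coset_next t l) w' else [::].

Definition schreier_gen (j : 'I_ngens) : G :=
  let p := enum_val j in
  gmul (gmul (c p.1) (g p.2)) (ginv (c (coset_next p.1 (p.2, false)))).

Lemma tau_cat t a b : tau t (a ++ b) = tau t a ++ tau (act t a) b.
Proof. by elim: a t => [|l a IH] t //=; rewrite IH. Qed.

Lemma tau_letter_linv t l : tau_letter (coset_next t l) (linv l) = linv (tau_letter t l).
Proof.
case: l => x [] //=; rewrite /tau_letter /linv /=.
by have := coset_nextK t (x, false); rewrite /linv /= => ->.
Qed.

Lemma tau_red t a b : red_step a b -> red_step (tau t a) (tau t b).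
Proof.
case=> x y l; rewrite !tau_cat.
have -> : tau (act t x) [:: l; linv l] = [:: tau_letter (act t x) l; linv (tau_letter (act t x) l)].
  by rewrite /= tau_letter_linv.
have -> : act (act t x) [:: l; linv l] = act t x by rewrite /act /= coset_nextK.
exact: RedStep.
Qed.

Lemma tau_freeq a b : freeq a b -> forall t, freeq (tau t a) (tau t b).
Proof.
elim=> [x y r|x|x y _ IH|x y z _ IH1 _ IH2] t.
- by apply: rst_step; apply: tau_red.
- exact: rst_refl.
- exact: rst_sym (IH t).
- exact: rst_trans (IH1 t) (IH2 t).
Qed.

Lemma tau_winv t v : tau (act t v) (winv v) = winv (tau t v).
Proof.
elim: v t => [|l v IH] t //=.
rewrite winv_cons tau_cat -/(act (coset_next t l) v) IH winv_cons; congr cat.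
by rewrite act_winv /= tau_letter_linv.
Qed.

Lemma eval_tau_letter t l :
  eval schreier_gen [:: tau_letter t l]
  = gmul (gmul (c t) (eval g [:: l])) (ginv (c (coset_next t l))).
Proof.
case: l => x []; rewrite /tau_letter /= /schreier_gen enum_rankK /=.
- have := coset_nextK t (x, true); rewrite /linv /= => ->.
  by rewrite !gmulr1 !ginvM !ginvK -!gmulA.
- by rewrite !gmulr1 -!gmulA.
Qed.

Lemma eval_tau t w :
  eval schreier_gen (tau t w) = gmul (gmul (c t) (eval g w)) (ginv (c (act t w))).
Proof.
elim: w t => [|l w IH] t; first by rewrite /= gmulr1 gmulrV.
have -> : tau t (l :: w) = [:: tau_letter t l] ++ tau (coset_next t l) w by [].
have -> : act t (l :: w) = act (coset_next t l) w by [].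
by rewrite eval_cat IH eval_tau_letter [eval g (l :: w)]eval_cons -!gmulA gmulK.
Qed.

Lemma eval_tau_id t w : eval g w = gone G -> eval schreier_gen (tau t w) = gone G.
Proof.
move=> e; rewrite eval_tau act_id ?e; last exact: nsg1 hN.
by rewrite gmulr1 gmulrV.
Qed.

Lemma schreier_gen_in j : H (schreier_gen j).
Proof.
rewrite /schreier_gen; set p := enum_val j.
have := nsgJV hN (c (coset_next p.1 (p.2, false)))
  (coset_ofP (gmul (c p.1) (eval g [:: (p.2, false)]))).
by rewrite /coset_next /= !gmulr1 -!gmulA gmulVK.
Qed.

Lemma tau_ncl (R : seq (word n)) (R' : seq (word ngens)) :
  (forall r, r \in R -> eval g r = gone G) ->
  (forall r, r \in R -> forall t, in_ncl R' (tau t r)) ->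
  forall w, in_ncl R w -> forall t, in_ncl R' (tau t w).
Proof.
move=> hRe hRt w; elim=> [|v r w' rR _ IH|v r w' rR _ IH|w1 w2 e _ IH] t.
- exact: ncl_nil.
- have hid : act (act t v) r = act t v by apply: act_id; rewrite hRe //; apply: nsg1 hN.
  rewrite !tau_cat hid tau_winv act_winv !catA; apply: ncl_cat (IH t).
  by rewrite -catA; apply: ncl_conjw (hRt r rR _).
- have hid : act (act t v) r = act t v by apply: act_id; rewrite hRe //; apply: nsg1 hN.
  have hidV : act (act t v) (winv r) = act t v by rewrite -{1}hid act_winv.
  have eV : tau (act t v) (winv r) = winv (tau (act t v) r) by rewrite -{1}hid tau_winv.
  rewrite !tau_cat hidV eV tau_winv act_winv !catA; apply: ncl_cat (IH t).
  by rewrite -catA; apply: ncl_conjw (ncl_winv (hRt r rR _)).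
- by apply: ncl_freeq (IH t); apply: tau_freeq.
Qed.

Section RelatorOrbits.
Variables (u : word n) (k : nat).
Hypothesis hk : order_mod H (eval g u) k.

Let k_gt0 : 0 < k. Proof. by case: hk. Qed.

Lemma act_wpowK t : act t (wpow u k) = t.
Proof. by apply: act_id; rewrite eval_wpow; case: hk => _ []. Qed.

Lemma act_wpow_mod t a : act t (wpow u a) = act t (wpow u (a %% k)).
Proof.
rewrite {1}(divn_eq a k) wpowD act_cat; congr act.
by elim: (a %/ k) => [|q IH] //; rewrite mulSn wpowD act_cat act_wpowK.
Qed.

Lemma act_wpow_inj t j j' : j < k -> j' < k ->
  act t (wpow u j) = act t (wpow u j') -> j = j'.
Proof.
wlog ljj : j j' / j <= j'.
  move=> W hj hj' e; case: (leqP j j') => l; first exact: W.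
  by apply/esym/W => //; apply: ltnW.
move=> hj hj' e; apply/eqP; rewrite eqn_leq ljj /= leqNgt; apply/negP => lt.
have e2 : act (act t (wpow u j)) (wpow u (j' - j)) = act t (wpow u j).
  by rewrite -act_cat -wpowD subnKC // e.
have := act_idE e2; rewrite eval_wpow; case: hk => _ [_]; apply.
by rewrite subn_gt0 lt /= (leq_ltn_trans (leq_subr _ _) hj').
Qed.

Definition orbit_mins : {set 'I_d} :=
  [set t : 'I_d | [forall j : 'I_k, (t <= act t (wpow u j))%N]].

Lemma orbit_minsP t0 : t0 \in orbit_mins -> forall a, (t0 <= act t0 (wpow u a))%N.
Proof.
rewrite inE => /forallP h a; rewrite act_wpow_mod.
exact: (h (Ordinal (ltn_pmod a k_gt0))).
Qed.

Lemma orbit_mins_cover t : exists2 t0, t0 \in orbit_mins & exists j, act t0 (wpow u j) = t.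
Proof.
pose P := fun v : nat => [exists j : 'I_k, (act t (wpow u j) : nat) == v].
have ex : exists v, P v by exists (act t (wpow u 0)); apply/existsP; exists (Ordinal k_gt0).
case: (ex_minnP ex) => v /existsP [j0 /eqP ej0] minv.
exists (act t (wpow u j0)).
  rewrite inE; apply/forallP => j; rewrite ej0 -act_cat -wpowD act_wpow_mod.
  by apply: minv; apply/existsP; exists (Ordinal (ltn_pmod (j0 + j) k_gt0)).
exists (k - j0); rewrite -act_cat -wpowD subnKC ?act_wpowK //.
exact: ltnW.
Qed.

(* The k cosets t0 u^j, j < k, are distinct and the orbits are disjoint. *)
Lemma card_orbit_mins : #|orbit_mins| * k <= d.
Proof.
pose f (p : 'I_d * 'I_k) := act p.1 (wpow u p.2).
have inj : {in setX orbit_mins [set: 'I_k] &, injective f}.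
  move=> [t0 j] [t0' j']; rewrite !in_setX !in_setT /= !andbT => h0 h0' e.
  rewrite /f /= in e.
  have et : t0 = t0'.
    apply: val_inj; apply/eqP; rewrite eqn_leq; apply/andP; split.
    - have := orbit_minsP h0 (j + (k - j')).
      by rewrite wpowD act_cat e -act_cat -wpowD subnKC ?act_wpowK // ltnW.
    - have := orbit_minsP h0' (j' + (k - j)).
      by rewrite wpowD act_cat -e -act_cat -wpowD subnKC ?act_wpowK // ltnW.
  subst t0'; congr pair; apply: val_inj; exact: act_wpow_inj e.
have := card_in_imset inj; rewrite cardsX cardsT card_ord => <-.
by rewrite -[X in _ <= X]card_ord max_card.
Qed.

(* A rewritten relator read from t is a conjugate of the one read from the
   orbit minimum of t, so the latter suffice. *)
Lemma ncl_tau_orbit (R' : seq (word ngens)) (e : nat) :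
  eval g (wpow u e) = gone G ->
  (forall t0, t0 \in orbit_mins -> in_ncl R' (tau t0 (wpow u e))) ->
  forall t, in_ncl R' (tau t (wpow u e)).
Proof.
move=> e1 hR t; case: (orbit_mins_cover t) => t0 h0 [j ej].
have hid : act t0 (wpow u e) = t0 by apply: act_id; rewrite e1; apply: nsg1 hN.
have E : tau t0 (wpow u j) ++ tau t (wpow u e) = tau t0 (wpow u e) ++ tau t0 (wpow u j).
  by rewrite -ej -tau_cat wpowC tau_cat hid.
apply: ncl_freeq (freeq_winvK (tau t0 (wpow u j)) (tau t (wpow u e))) _.
by rewrite E; have := ncl_conjw (winv (tau t0 (wpow u j))) (hR t0 h0); rewrite winvK catA.
Qed.

End RelatorOrbits.

Section SchreierPresentation.
Variables (b : 'I_d) (S : 'I_d -> word n).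
Hypothesis hcb : c b = gone G.
Hypothesis hS : forall t, eval g (S t) = c t.

(* Inverse of the rewriting: the Schreier generator (t, x) written in F_n. *)
Definition untau_letter (y : letter ngens) : word n :=
  let p := enum_val y.1 in
  let w := S p.1 ++ [:: (p.2, false)] ++ winv (S (coset_next p.1 (p.2, false))) in
  if y.2 then winv w else w.

Definition untau (w : word ngens) : word n := flatten (map untau_letter w).

Definition schreier_word t := tau b (S t).

Lemma eval_untau_letter y : eval g (untau_letter y) = eval schreier_gen [:: y].
Proof.
by case: y => j []; rewrite /untau_letter /= ?eval_winv eval_cat eval_cons eval_winv
  !hS /schreier_gen /= !gmulr1 -!gmulA.
Qed.

Lemma eval_untau w : eval g (untau w) = eval schreier_gen w.
Proof. by elim: w => [|y w IH] //=; rewrite eval_cat IH eval_untau_letter /= gmulr1. Qed.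

Lemma act_transversal t : act b (S t) = t.
Proof. by rewrite actE hcb gmul1 hS coset_of_rep. Qed.

Lemma act_untau_letter y : act b (untau_letter y) = b.
Proof.
apply: act_id; rewrite eval_untau_letter.
by case: y => j [] /=; rewrite gmulr1; [apply: (nsgV hN)|]; apply: schreier_gen_in.
Qed.

Lemma tau_untau_letter y :
  exists t1 t2, tau b (untau_letter y) = schreier_word t1 ++ [:: y] ++ winv (schreier_word t2).
Proof.
pose next1 (j : 'I_ngens) := coset_next (enum_val j).1 ((enum_val j).2, false).
have pos j : tau b (untau_letter (j, false))
    = schreier_word (enum_val j).1 ++ [:: (j, false)] ++ winv (schreier_word (next1 j)).
  set t := (enum_val j).1; set x := (enum_val j).2.
  have -> : untau_letter (j, false) = S t ++ [:: (x, false)] ++ winv (S (next1 j)) by [].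
  rewrite !tau_cat act_transversal.
  have := tau_winv b (S (next1 j)); rewrite act_transversal => ->.
  have -> : tau t [:: (x, false)] = [:: (enum_rank (t, x), false)] by [].
  by rewrite /t /x -surjective_pairing enum_valK.
case: y => j []; last by exists (enum_val j).1, (next1 j); rewrite pos.
exists (next1 j), (enum_val j).1.
have -> : untau_letter (j, true) = winv (untau_letter (j, false)) by [].
rewrite -{1}(act_untau_letter (j, false)) tau_winv pos !winv_cat winvK -catA.
by [].
Qed.

Lemma ncl_tau_untau (R' : seq (word ngens)) :
  (forall t, in_ncl R' (schreier_word t)) ->
  forall w, in_ncl R' (tau b (untau w) ++ winv w).
Proof.
move=> hP; elim=> [|y w IH]; first exact: ncl_nil.
rewrite /untau /= -/(untau w) tau_cat act_untau_letter winv_cons.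
case: (tau_untau_letter y) => t1 [t2 ->]; rewrite -!catA.
have -> : schreier_word t1 ++ [:: y] ++ winv (schreier_word t2) ++ tau b (untau w)
      ++ winv w ++ [:: linv y]
    = schreier_word t1 ++ ([:: y] ++ (winv (schreier_word t2) ++ (tau b (untau w)
      ++ winv w)) ++ winv [:: y]).
  by rewrite !catA.
apply: ncl_cat (hP t1) _; apply: ncl_conjw; apply: ncl_cat IH.
exact: ncl_winv (hP t2).
Qed.

Lemma presents_sub_schreier (R : seq (word n)) (R' : seq (word ngens)) :
  presents g R ->
  (forall t, in_ncl R' (schreier_word t)) ->
  (forall r, r \in R -> forall t, in_ncl R' (tau t r)) ->
  (forall r', r' \in R' -> eval schreier_gen r' = gone G) ->
  presents_sub H schreier_gen R'.
Proof.
move=> [surj hrel] hP hRt hR'.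
have hRe r : r \in R -> eval g r = gone G by move=> rR; apply/hrel; apply: ncl_mem.
split; first exact: schreier_gen_in.
split=> [x hx|w].
  have [W eW] := surj x; exists (tau b W).
  by rewrite eval_tau act_id ?eW // hcb ginv1 gmul1 gmulr1.
split=> [e1|]; last exact: eval_ncl.
have h := ncl_cat (ncl_winv (ncl_tau_untau hP w))
  (tau_ncl hRe hRt (proj1 (hrel _) (etrans (eval_untau w) e1)) b).
apply: ncl_freeq h; rewrite winv_cat winvK -catA -[X in freeq _ X]cats0.
by apply: freeq_catl; apply: freeq_winvl.
Qed.

Definition transversal_relators := [seq schreier_word t | t <- enum 'I_d & t != b].

Lemma size_transversal_relators : size transversal_relators = d.-1.
Proof.
by rewrite size_map; have := cardC1 b; rewrite card_ord cardE /enum_mem filter_predT => <-.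
Qed.

Lemma eval_schreier_word t : eval schreier_gen (schreier_word t) = gone G.
Proof. by rewrite eval_tau act_transversal hcb gmul1 hS gmulrV. Qed.

Lemma ncl_schreier_word (R' : seq (word ngens)) :
  S b = [::] -> {subset transversal_relators <= R'} ->
  forall t, in_ncl R' (schreier_word t).
Proof.
move=> hSb sub t; case: (eqVneq t b) => [->|ntb].
  by rewrite /schreier_word hSb; apply: ncl_nil.
by apply/ncl_mem/sub/mapP; exists t; rewrite // mem_filter ntb mem_enum.
Qed.

End SchreierPresentation.

Section OrbitRelators.
Variables (r : nat) (u : 'I_r -> word n) (e k : 'I_r -> nat).
Hypothesis hk : forall i, order_mod H (eval g (u i)) (k i).
Hypothesis hue : forall i, eval g (wpow (u i) (e i)) = gone G.

Definition orbit_relators : seq (word ngens) :=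
  flatten [seq [seq tau t (wpow (u i) (e i)) | t <- enum (orbit_mins (u i) (k i))]
          | i <- enum 'I_r].

Lemma size_orbit_relators :
  ((size orbit_relators)%:R <= d%:R * \sum_(i < r) ((k i)%:R)^-1 :> rat)%R.
Proof.
rewrite size_flatten /shape -map_comp sumnE big_map big_enum /= natr_sum mulr_sumr.
apply: ler_sum => i _; rewrite /= size_map -cardE.
have k_gt0 : 0 < k i by case: (hk i).
by rewrite ler_pdivlMr ?ltr0n // -natrM ler_nat card_orbit_mins.
Qed.

Lemma eval_orbit_relators w : w \in orbit_relators -> eval schreier_gen w = gone G.
Proof. by move=> /flattenP [_ /mapP [i _ ->] /mapP [t _ ->]]; apply: eval_tau_id. Qed.

Lemma ncl_orbit_relators (R' : seq (word ngens)) :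
  {subset orbit_relators <= R'} ->
  forall w, w \in relators u e -> forall t, in_ncl R' (tau t w).
Proof.
move=> sub _ /mapP [i _ ->]; apply: (ncl_tau_orbit (hk i) (hue i)) => t0 h0.
apply/ncl_mem/sub/flattenP.
exists [seq tau t1 (wpow (u i) (e i)) | t1 <- enum (orbit_mins (u i) (k i))].
  by apply/mapP; exists i; rewrite ?mem_enum.
by apply/mapP; exists t0; rewrite ?mem_enum.
Qed.

End OrbitRelators.

End Cosets.

Lemma index_is_rep1 (G : Grp) (H : G -> Prop) (d : nat) :
  normal_subgroup H -> index_is H d ->
  exists b (c : 'I_d -> G), [/\ c b = gone G,
    forall x, exists j, H (gmul (ginv (c j)) x) &
    forall j j', H (gmul (ginv (c j)) (c j')) -> j = j'].
Proof.
move=> hN [s [covs uniqs]]; have [b hb] := covs (gone G).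
have hsbV : H (ginv (s b)) by move: hb; rewrite gmulr1.
have hsb : H (s b) := nsgVE hN hsbV.
exists b, (fun t => if t == b then gone G else s t); split; first by rewrite eqxx.
  move=> x; have [j hj] := covs x; exists j; case: eqP => [ej|_] //.
  by rewrite ginv1 gmul1; have := nsgM hN hsb; rewrite -ej => /(_ _ hj); rewrite gmulVK.
move=> j j'; case: eqP => [->|_]; case: eqP => [->|_] //; rewrite ?ginv1 ?gmul1 ?gmulr1.
- by move=> h; apply: uniqs; exact: (nsgM hN hsbV h).
- by move=> h; apply: uniqs; exact: (nsgM hN h hsb).
- exact: uniqs.
Qed.

Lemma deficiency_ge_normal_subgroup (G : Grp) (n r : nat) (u : 'I_r -> word n)
    (e : 'I_r -> nat) (g : 'I_n -> G) (k : 'I_r -> nat) (H : G -> Prop) (d : nat) :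
  presents g (relators u e) -> normal_subgroup H -> index_is H d ->
  (forall i, order_mod H (eval g (u i)) (k i)) ->
  deficiency_ge H (1 + d%:R * ((n%:R - \sum_(i < r) ((k i)%:R)^-1) - 1) : rat)%R.
Proof.
move=> hpres hN hidx hk.
have [b [c [hcb cover cuniq]]] := index_is_rep1 hN hidx.
have [S hS hSb] : exists2 S : 'I_d -> word n, forall t, eval g (S t) = c t & S b = [::].
  have [surj _] := hpres; have [S0 hS0] := choice (fun t => surj (c t)).
  exists (fun t => if t == b then [::] else S0 t); last by rewrite eqxx.
  by move=> t; case: eqP => [->|].
have hue i : eval g (wpow (u i) (e i)) = gone G.
  by apply/(proj2 hpres)/ncl_mem/mapP; exists i; rewrite ?mem_enum.
pose Rt := transversal_relators g cover b S; pose Ro := orbit_relators g cover u e k.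
have hH : presents_sub H (schreier_gen g cover) (Rt ++ Ro).
  apply: (presents_sub_schreier hN cuniq hcb hS hpres).
  - by apply: (ncl_schreier_word hSb) => w hw; rewrite mem_cat hw.
  - by apply: (ncl_orbit_relators hN cuniq hk hue) => w hw; rewrite mem_cat hw orbT.
  - move=> w; rewrite mem_cat => /orP [/mapP [t _ ->]|].
      exact: (eval_schreier_word hN cover cuniq hcb hS).
    exact: (eval_orbit_relators hN cuniq hue).
have d_gt0 : 0 < d by apply: leq_ltn_trans (ltn_ord b).
have hsize : ((size (Rt ++ Ro))%:R <= (d%:R - 1) + d%:R * \sum_(i < r) ((k i)%:R)^-1 :> rat)%R.
  have -> : (d%:R - 1 = (d.-1)%:R :> rat)%R by rewrite -{1}(prednK d_gt0) -natr1 addrK.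
  by rewrite size_cat natrD size_transversal_relators lerD2l; apply: size_orbit_relators.
move=> eps heps; exists (ngens n d), (schreier_gen g cover), (Rt ++ Ro); split => //.
have -> : ((ngens n d)%:R = d%:R * n%:R :> rat)%R by rewrite /ngens card_prod !card_ord natrM.
move: hsize; set D := (d%:R : rat); set Sk := (\sum_(i < r) _)%R; lra.
Qed.

Definition bigcap_core (G : Grp) (I : Type) (K : I -> G -> Prop) (x : G) : Prop :=
  forall i z, K i (gmul (ginv z) (gmul x z)).

Section BigcapCore.
Variables (G : Grp) (I : finType) (K : I -> G -> Prop).
Hypothesis hK : forall i, subgroup (K i).

Let KM i x y : K i x -> K i y -> K i (gmul x y). Proof. by case: (hK i) => _ []; auto. Qed.
Let KV i x : K i x -> K i (ginv x). Proof. by case: (hK i) => _ []; auto. Qed.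

Lemma bigcap_core_normal : normal_subgroup (bigcap_core K).
Proof.
split; [split; [|split]|].
- by move=> i z; rewrite gmul1 gmulV; case: (hK i).
- by move=> x y hx hy i z; have := KM (hx i z) (hy i z); rewrite -!gmulA gmulVK.
- by move=> x hx i z; have := KV (hx i z); rewrite !ginvM ginvK -!gmulA.
- by move=> x y hx i z; have := hx i (gmul y z); rewrite !ginvM -!gmulA.
Qed.

Lemma bigcap_core_sub i x : bigcap_core K x -> K i x.
Proof. by move=> h; have := h i (gone G); rewrite ginv1 gmul1 gmulr1. Qed.

Variables (D : nat) (s : I -> 'I_D -> G).
Hypothesis hs : forall i x, exists a, K i (gmul (ginv (s i a)) x).

Definition coset_code i (z : G) : option 'I_D := [pick a | `[< K i (gmul (ginv (s i a)) z) >]].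

Lemma coset_codeP i z z' : coset_code i z = coset_code i z' <-> K i (gmul (ginv z) z').
Proof.
split=> [|h].
  rewrite /coset_code; case: pickP => [a /asboolP ha|h0]; last first.
    by have [a] := hs i z; have := h0 a; case: asboolP.
  case: pickP => [a' /asboolP ha' [ea]|//]; rewrite -ea in ha'.
  by have := KM (KV ha) ha'; rewrite ginvM ginvK -!gmulA gmulVK.
apply: eq_pick => a /=; apply/asboolP/asboolP => h1.
- by have := KM h1 h; rewrite -gmulA gmulVK.
- by have := KM h1 (KV h); rewrite ginvM ginvK -!gmulA gmulVK.
Qed.

(* x is determined modulo the core by how it permutes all the cosets of all K_i. *)
Definition core_code (x : G) : {ffun I * 'I_D -> option 'I_D} :=
  [ffun p => coset_code p.1 (gmul x (s p.1 p.2))].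

Lemma core_codeP x y : core_code x = core_code y <-> bigcap_core K (gmul (ginv x) y).
Proof.
split=> [e i z|h].
  have [a ha] := hs i z.
  have : core_code x (i, a) = core_code y (i, a) by rewrite e.
  rewrite !ffunE /= => /coset_codeP h.
  by have := KM (KM (KV ha) h) ha; rewrite !ginvM !ginvK -!gmulA !gmulVK.
apply/ffunP => -[i a]; rewrite !ffunE; apply/coset_codeP.
by have := h i (s i a); rewrite ginvM -!gmulA.
Qed.

Lemma bigcap_core_finite_index_cover : finite_index (bigcap_core K).
Proof.
split; first by case: bigcap_core_normal.
pose Im := [set f | `[< exists x, core_code x = f >]].
have ex (j : 'I_#|Im|) : exists x, core_code x = enum_val j.
  by have := enum_valP j; rewrite inE => /asboolP.
pose rep j := proj1_sig (cid (ex j)).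
have repP j : core_code (rep j) = enum_val j := proj2_sig (cid (ex j)).
exists #|Im|, rep; split.
- move=> x; have hx : core_code x \in Im by rewrite inE; apply/asboolP; exists x.
  by exists (enum_rank_in hx (core_code x)); apply/core_codeP; rewrite repP enum_rankK_in.
- by move=> j j' /core_codeP; rewrite !repP => /enum_val_inj.
Qed.

End BigcapCore.

Lemma cover_widen (G : Grp) (K : G -> Prop) (D D' : nat) (s : 'I_D -> G) :
  D <= D' -> (forall x, exists j, K (gmul (ginv (s j)) x)) ->
  exists s' : 'I_D' -> G, forall x, exists j, K (gmul (ginv (s' j)) x).
Proof.
move=> le cov; exists (fun a => if insub (val a) is Some j then s j else gone G).
by move=> x; have [j hj] := cov x; exists (widen_ord le j); rewrite /= valK.
Qed.

Lemma bigcap_core_finite_index (G : Grp) (I : finType) (K : I -> G -> Prop) :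
  (forall i, finite_index (K i)) -> finite_index (bigcap_core K).
Proof.
move=> hK.
pose covers i D := exists s : 'I_D -> G, forall x, exists j, K i (gmul (ginv (s j)) x).
have [D hD] : {D : I -> nat & forall i, covers i (D i)}.
  by apply: choice => i; have [_ [D [s [cov _]]]] := hK i; exists D, s.
have [s hs] : {s : I -> 'I_(\max_i D i) -> G &
    forall i x, exists a, K i (gmul (ginv (s i a)) x)}.
  apply: (@choice _ _ (fun i (si : 'I_(\max_i D i) -> G) =>
    forall x, exists a, K i (gmul (ginv (si a)) x))) => i.
  have [s0 hs0] := hD i.
  by apply: cover_widen hs0; apply: (@leq_bigmax _ D i).
by apply: (bigcap_core_finite_index_cover _ hs) => i; case: (hK i).
Qed.

(* Each of the finitely many exponents 0 < j < k_i is witnessed outside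
   some finite-index subgroup; the core of all of them works for every i. *)
Lemma order_mod_finite_residual_sep (G : Grp) (I : finType) (x : I -> G) (k : I -> nat) :
  (forall i, order_mod (@finite_residual G) (x i) (k i)) ->
  exists H : G -> Prop, normal_subgroup H /\ finite_index H /\
    forall i, order_mod H (x i) (k i).
Proof.
move=> hres; pose J := {p : I * 'I_(\max_i k i) | 0 < p.2 < k p.1}.
have [K hK] : {K : J -> G -> Prop & forall p,
    finite_index (K p) /\ ~ K p (gpow (x (val p).1) (val p).2)}.
  apply: (@choice _ _ (fun (p : J) (Kp : G -> Prop) =>
    finite_index Kp /\ ~ Kp (gpow (x (val p).1) (val p).2))) => -[[i j] /= hj].
  have [_ [_ /(_ j hj)]] := hres i.
  by move=> /existsNP [K /not_implyP]; exists K.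
have hcore := bigcap_core_finite_index (fun p => proj1 (hK p)).
exists (bigcap_core K); split; first exact: bigcap_core_normal (fun p => proj1 (proj1 (hK p))).
split=> // i; have [k_gt0 [hxk _]] := hres i.
split=> //; split=> [|j hj]; first exact: hxk.
have jM : j < \max_i k i := leq_trans (proj2 (andP hj)) (@leq_bigmax _ k i).
by move/(bigcap_core_sub (exist _ (i, Ordinal jM) hj)); apply: (proj2 (hK _)).
Qed.

Theorem mainTheorem8 (G : Grp) (n r : nat) (u : 'I_r -> word n)
    (mm : 'I_r -> nat) (g : 'I_n -> G) (k : 'I_r -> nat) :
  1 <= n ->
  (forall i, 1 <= mm i) ->
  (forall i, ~ proper_power (u i)) ->
  presents g (relators u mm) ->
  (forall i, order_mod (@finite_residual G) (eval g (u i)) (k i)) ->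
  (exists H : G -> Prop, normal_subgroup H /\ finite_index H /\
      forall i, order_mod H (eval g (u i)) (k i)) /\
  (forall (H : G -> Prop) (d : nat), normal_subgroup H -> index_is H d ->
      (forall i, order_mod H (eval g (u i)) (k i)) ->
      deficiency_ge H (1 + d%:R * ((n%:R - \sum_(i < r) ((k i)%:R)^-1) - 1)
                       : rat)%R).
Proof.
(* The bound uses only the orders k_i. *)
move=> _ _ _ hpres hres; split; first exact: order_mod_finite_residual_sep hres.
by move=> H d hN hidx hk; apply: deficiency_ge_normal_subgroup hpres hN hidx hk.
Qed.
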